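(* There exists a shift space $X''$ (over a finite alphabet) such that $(X'',\sigma)$ is $\mathrm{Per}(\sigma|_{X''})$-closeable but $\mathrm{Per}(\sigma|_{X''})$ is not linkable.
   Context: A shift space is a closed $\sigma$-invariant subset of $\mathcal A^{\mathbb N}$, $\mathcal A$ a finite alphabet, with metric $\rho(x,y)=2^{-\min\{k:x_k\ne y_k\}}$ and shift $\sigma$. $\mathcal E(x,n)=\frac1n\sum_{j<n}\delta_{\sigma^jx}$; $x$ is generic for $\mu$ if $\mathcal E(x,n)\to\mu$. $B(x,n,\varepsilon)=\{y:\rho(\sigma^jy,\sigma^jx)<\varepsilon,\ 0\le j<n\}$. A point $x$ is $K$-closeable if for every $\varepsilon>0$, $N>0$ there exist integers $N\le p\le q\le(1+\varepsilon)p$ and $y\in B(x,p,\varepsilon)\cap K$ with $\sigma^qy=y$; the system is $K$-closeable if every ergodic measure has a $K$-closeable generic point. A set $K$ of periodic points is linkable if for all $y_1,y_2\in K$, $\varepsilon>0$, $\lambda\in[0,1]$ there exist $p_1,p_2,q_1,q_2\in\mathbb N$ and $z\in K$ with: $\sigma^{q_2}z=z$; $\lambda-\varepsilon\le\frac{p_1}{p_1+p_2}\le\lambda+\varepsilon$; $p_1\le q_1\le(1+\varepsilon)p_1$ and $z\in B(y_1,p_1,\varepsilon)$; $p_2\le q_2-q_1\le(1+\varepsilon)p_2$ and $\sigma^{q_1}z\in B(y_2,p_2,\varepsilon)$. *)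

From Stdlib Require Import Reals Lra Lia Arith List Classical ClassicalEpsilon.
Import ListNotations.
Open Scope R_scope.

(* Alphabet: {0, ..., a-1}; points of A^N are sequences nat -> nat. *)
Definition seqn := nat -> nat.

Definition in_full_shift (a : nat) (x : seqn) : Prop := forall k, (x k < a)%nat.

Definition shift (x : seqn) : seqn := fun k => x (S k).
Definition shiftn (j : nat) (x : seqn) : seqn := fun k => x (j + k)%nat.

Definition first_diff (x y : seqn) : nat :=
  epsilon (inhabits 0%nat)
    (fun k => x k <> y k /\ forall j, (j < k)%nat -> x j = y j).

Definition rho (x y : seqn) : R :=
  if excluded_middle_informative (forall k, x k = y k) then 0
  else / (2 ^ first_diff x y).

Definition is_closed (X : seqn -> Prop) : Prop :=
  forall x, (forall n, exists y, X y /\ forall i, (i < n)%nat -> y i = x i) -> X x.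

Definition shift_space (a : nat) (X : seqn -> Prop) : Prop :=
  (forall x, X x -> in_full_shift a x) /\ is_closed X /\
  (forall x, X x -> X (shift x)).

Definition bowen_ball (x : seqn) (n : nat) (eps : R) (y : seqn) : Prop :=
  forall j, (j < n)%nat -> rho (shiftn j y) (shiftn j x) < eps.

Definition Per (X : seqn -> Prop) (y : seqn) : Prop :=
  X y /\ exists q, (q >= 1)%nat /\ shiftn q y = y.

(* ---- Invariant Borel probability measures, via cylinder weights ----
   A Borel probability measure on A^N is uniquely determined by its values on
   cylinders [w] = {x : x_i = w_i, i < |w|}, and any nonnegative normalised
   Kolmogorov-consistent family of such values extends uniquely.
   m w stands for mu([w]). *)
Definition sum_letters (a : nat) (f : nat -> R) : R :=
  fold_right Rplus 0 (map f (seq 0 a)).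

Fixpoint in_cylb (w : list nat) (x : seqn) : bool :=
  match w with
  | [] => true
  | c :: w' => Nat.eqb (x 0%nat) c && in_cylb w' (shift x)
  end.

Definition in_cyl (w : list nat) (x : seqn) : Prop := in_cylb w x = true.

(* mu is a sigma-invariant Borel probability measure on A^N with mu(X) = 1
   (as X is closed, mu(X)=1 iff mu([w]) = 0 for every cylinder missing X). *)
Definition inv_measure (a : nat) (X : seqn -> Prop) (m : list nat -> R) : Prop :=
  m [] = 1 /\
  (forall w, 0 <= m w) /\
  (forall w, m w = sum_letters a (fun c => m (w ++ [c]))) /\
  (forall w, m w = sum_letters a (fun c => m (c :: w))) /\
  (forall w, (forall x, X x -> ~ in_cyl w x) -> m w = 0).

Definition ergodic (a : nat) (X : seqn -> Prop) (m : list nat -> R) : Prop :=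
  inv_measure a X m /\
  forall m1 m2 t, inv_measure a X m1 -> inv_measure a X m2 -> 0 < t < 1 ->
    (forall w, m w = t * m1 w + (1 - t) * m2 w) ->
    (forall w, m1 w = m w) /\ (forall w, m2 w = m w).

Definition emp_cyl (x : seqn) (n : nat) (w : list nat) : R :=
  INR (length (filter (fun j => in_cylb w (shiftn j x)) (seq 0 n))) / INR n.

(* x generic for mu: E(x,n) -> mu weak-*, equivalently on all cylinders
   (cylinder indicators are continuous and span a dense subspace of C(A^N)). *)
Definition generic (x : seqn) (m : list nat -> R) : Prop :=
  forall w, Un_cv (fun n => emp_cyl x (S n) w) (m w).

Definition closeable_point (K : seqn -> Prop) (x : seqn) : Prop :=
  forall eps N, eps > 0 -> (N > 0)%nat ->
    exists p q y, (N <= p)%nat /\ (p <= q)%nat /\ INR q <= (1 + eps) * INR p /\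
      bowen_ball x p eps y /\ K y /\ shiftn q y = y.

Definition closeable_system (a : nat) (X : seqn -> Prop) (K : seqn -> Prop) : Prop :=
  forall m, ergodic a X m -> exists x, X x /\ generic x m /\ closeable_point K x.

Definition linkable (K : seqn -> Prop) : Prop :=
  forall y1 y2 eps lam, K y1 -> K y2 -> eps > 0 -> 0 <= lam <= 1 ->
    exists p1 p2 q1 q2 z,
      (p1 >= 1)%nat /\ (p2 >= 1)%nat /\ (q1 >= 1)%nat /\ (q2 >= 1)%nat /\
      K z /\ shiftn q2 z = z /\
      lam - eps <= INR p1 / INR (p1 + p2) <= lam + eps /\
      (p1 <= q1)%nat /\ INR q1 <= (1 + eps) * INR p1 /\ bowen_ball y1 p1 eps z /\
      (p2 <= q2 - q1)%nat /\ INR (q2 - q1) <= (1 + eps) * INR p2 /\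
      (q1 <= q2)%nat /\
      bowen_ball y2 p2 eps (shiftn q1 z).

(* The shift space {0^oo, 1^oo} consisting of two fixed points works.  Its only
   invariant measures are the convex combinations of the two Dirac masses, so the
   ergodic ones are the Dirac masses themselves; each has its fixed point as a
   generic point, and a fixed point is trivially closeable by itself.  Linking
   0^oo to 1^oo is impossible, since an orbit in the space cannot pass near both
   fixed points. *)
From Stdlib Require Import Reals Lra Lia Arith List Classical ClassicalEpsilon.
Import ListNotations.
Open Scope R_scope.

Definition constant_seq (c : nat) : seqn := fun _ => c.

Definition two_fixed_points (y : seqn) : Prop :=
  (forall k, y k = 0%nat) \/ (forall k, y k = 1%nat).

Lemma rho_diag (x : seqn) : rho x x = 0.
Proof.
  unfold rho; destruct excluded_middle_informative as [_ | Hne]; [reflexivity |].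
  now exfalso; apply Hne.
Qed.

Lemma rho_lt1_head (x y : seqn) : rho x y < 1 -> x 0%nat = y 0%nat.
Proof.
  intros Hlt; apply NNPP; intros Hne.
  unfold rho in Hlt; destruct excluded_middle_informative as [Heq | _]; [now apply Hne |].
  assert (Hfd : first_diff x y = 0%nat).
  { unfold first_diff.
    destruct (epsilon_spec (inhabits 0%nat)
                (fun k => x k <> y k /\ forall j, (j < k)%nat -> x j = y j)) as [_ Hk].
    - exists 0%nat; split; [exact Hne | intros; lia].
    - destruct (epsilon _ _) as [| k]; [reflexivity |].
      exfalso; apply Hne, Hk; lia. }
  rewrite Hfd in Hlt; simpl in Hlt; lra.
Qed.

Lemma in_cylb_constant (w : list nat) (c : nat) :
  in_cylb w (constant_seq c) = forallb (Nat.eqb c) w.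
Proof. induction w as [| d w IH]; simpl; [reflexivity | now rewrite <- IH]. Qed.

Lemma forallb_eqb_repeat (c n : nat) : forallb (Nat.eqb c) (repeat c n) = true.
Proof. induction n as [| n IH]; simpl; [reflexivity | now rewrite Nat.eqb_refl]. Qed.

Lemma in_cylb_constant_repeat (w : list nat) (y : seqn) (c : nat) :
  in_cylb w y = true -> (forall k, y k = c) -> w = repeat c (length w).
Proof.
  revert y; induction w as [| d w IH]; intros y Hw Hy; [reflexivity |].
  simpl in Hw; apply andb_prop in Hw as [Hd Hw]; apply Nat.eqb_eq in Hd.
  rewrite Hy in Hd; subst d; simpl; f_equal.
  apply (IH (shift y)); [exact Hw | intros k; apply Hy].
Qed.

Lemma sum_letters_2 (f : nat -> R) : sum_letters 2 f = f 0%nat + (f 1%nat + 0).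
Proof. reflexivity. Qed.

Lemma two_fixed_points_constant (c : nat) :
  (c < 2)%nat -> two_fixed_points (constant_seq c).
Proof. intros Hc; destruct c as [| [| c]]; [left | right | lia]; reflexivity. Qed.

Lemma Per_two_fixed_points_constant (c : nat) :
  (c < 2)%nat -> Per two_fixed_points (constant_seq c).
Proof.
  intros Hc; split; [now apply two_fixed_points_constant |].
  exists 1%nat; split; [lia | reflexivity].
Qed.

Lemma shift_space_two_fixed_points : shift_space 2 two_fixed_points.
Proof.
  split; [| split].
  - intros x [Hx | Hx] k; rewrite Hx; lia.
  - intros x Happrox.
    assert (Hk : forall k, x k = x 0%nat).
    { intros k; destruct (Happrox (S k)) as [y [Hy Hxy]].
      rewrite <- (Hxy k), <- (Hxy 0%nat) by lia.
      destruct Hy as [Hy | Hy]; now rewrite !Hy. }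
    destruct (Happrox 1%nat) as [y [Hy Hxy]].
    rewrite <- (Hxy 0%nat) in Hk by lia.
    destruct Hy as [Hy | Hy]; [left | right]; intros k; rewrite Hk; apply Hy.
  - intros x [Hx | Hx]; [left | right]; intros k; apply Hx.
Qed.

Definition dirac_cyl (c : nat) (w : list nat) : R :=
  if in_cylb w (constant_seq c) then 1 else 0.

Lemma inv_measure_dirac_cyl (c : nat) :
  (c < 2)%nat -> inv_measure 2 two_fixed_points (dirac_cyl c).
Proof.
  intros Hc; unfold dirac_cyl; repeat split.
  - intros w; destruct in_cylb; lra.
  - intros w; rewrite sum_letters_2, !in_cylb_constant, !forallb_app; simpl.
    destruct (forallb (Nat.eqb c) w); destruct c as [| [| c]]; simpl; lra || lia.
  - intros w; rewrite sum_letters_2, !in_cylb_constant; simpl.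
    destruct (forallb (Nat.eqb c) w); destruct c as [| [| c]]; simpl; lra || lia.
  - intros w Hmiss; destruct in_cylb eqn:Hw; [| reflexivity].
    exfalso; apply (Hmiss (constant_seq c)); [now apply two_fixed_points_constant | exact Hw].
Qed.

Lemma cylinder_two_fixed_points_cases (w : list nat) :
  (exists c n, (c < 2)%nat /\ w = repeat c (S n)) \/ w = [] \/
  (forall x, two_fixed_points x -> ~ in_cyl w x).
Proof.
  destruct (classic (exists x, two_fixed_points x /\ in_cyl w x)) as [[x [Hx Hw]] | Hmiss].
  - destruct w as [| d w']; [now right; left | left].
    destruct Hx as [Hx | Hx]; [exists 0%nat | exists 1%nat];
      exists (length w'); split; [lia | exact (in_cylb_constant_repeat _ _ _ Hw Hx) | lia
                                  | exact (in_cylb_constant_repeat _ _ _ Hw Hx)].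
  - right; right; intros x Hx Hw; apply Hmiss; now exists x.
Qed.

Section InvariantMeasure.

Variable m : list nat -> R.
Hypothesis Hm : inv_measure 2 two_fixed_points m.

Lemma inv_measure_letter_1 : m [1%nat] = 1 - m [0%nat].
Proof.
  destruct Hm as (Hnil & _ & _ & Hleft & _).
  pose proof (Hleft []) as Hsum; rewrite sum_letters_2, Hnil in Hsum; lra.
Qed.

(* Prepending the other letter to a block c^n gives a cylinder missing the space. *)
Lemma inv_measure_repeat (c n : nat) : (c < 2)%nat -> m (repeat c (S n)) = m [c].
Proof.
  destruct Hm as (_ & _ & _ & Hleft & Hmiss); intros Hc.
  induction n as [| n IH]; [reflexivity |].
  rewrite <- IH, (Hleft (repeat c (S n))), sum_letters_2.
  assert (Hother : forall d, d <> c -> m (d :: repeat c (S n)) = 0).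
  { intros d Hdc; apply Hmiss; intros x Hx Hw; unfold in_cyl in Hw; simpl in Hw.
    apply andb_prop in Hw as [H0 Hw]; apply andb_prop in Hw as [H1 _].
    apply Nat.eqb_eq in H0; apply Nat.eqb_eq in H1; unfold shift in H1.
    destruct Hx as [Hx | Hx]; rewrite !Hx in *; lia. }
  destruct c as [| [| c]]; [| | lia].
  - rewrite (Hother 1%nat) by lia; simpl; lra.
  - rewrite (Hother 0%nat) by lia; simpl; lra.
Qed.

Lemma inv_measure_dirac_decomposition (w : list nat) :
  m w = m [0%nat] * dirac_cyl 0 w + (1 - m [0%nat]) * dirac_cyl 1 w.
Proof.
  pose proof inv_measure_letter_1 as Hm1.
  destruct Hm as (Hnil & _ & _ & _ & Hmiss).
  unfold dirac_cyl.
  destruct (cylinder_two_fixed_points_cases w) as [[c [n [Hc ->]]] | [-> | Hw]].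
  - rewrite inv_measure_repeat, !in_cylb_constant by exact Hc.
    destruct c as [| [| c]]; [| | lia]; rewrite forallb_eqb_repeat; simpl; lra.
  - simpl; lra.
  - assert (Hout : forall c, (c < 2)%nat -> in_cylb w (constant_seq c) = false).
    { intros c Hc; apply Bool.not_true_is_false; intros Hin.
      exact (Hw _ (two_fixed_points_constant c Hc) Hin). }
    rewrite Hmiss, !Hout by (exact Hw || lia); lra.
Qed.

End InvariantMeasure.

Lemma ergodic_two_fixed_points_dirac (m : list nat -> R) :
  ergodic 2 two_fixed_points m ->
  exists c, (c < 2)%nat /\ forall w, m w = dirac_cyl c w.
Proof.
  intros [Hm Hext].
  pose proof (inv_measure_dirac_decomposition m Hm) as Hdec.
  pose proof (inv_measure_letter_1 m Hm) as Hm1.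
  destruct Hm as (_ & Hnonneg & _).
  pose proof (Hnonneg [0%nat]); pose proof (Hnonneg [1%nat]).
  destruct (Req_dec (m [0%nat]) 1) as [Hone | Hone].
  { exists 0%nat; split; [lia |]; intros w; rewrite Hdec, Hone; ring. }
  destruct (Req_dec (m [0%nat]) 0) as [Hzero | Hzero].
  { exists 1%nat; split; [lia |]; intros w; rewrite Hdec, Hzero; ring. }
  exfalso.
  destruct (Hext (dirac_cyl 0) (dirac_cyl 1) (m [0%nat])) as [Hd0 _];
    [apply inv_measure_dirac_cyl; lia | apply inv_measure_dirac_cyl; lia | lra | exact Hdec |].
  specialize (Hd0 [0%nat]); unfold dirac_cyl in Hd0; simpl in Hd0; lra.
Qed.

Lemma emp_cyl_constant (c n : nat) (w : list nat) :
  emp_cyl (constant_seq c) (S n) w = dirac_cyl c w.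
Proof.
  unfold emp_cyl, dirac_cyl.
  assert (Hlen : forall l, length (filter (fun j => in_cylb w (shiftn j (constant_seq c))) l) =
                           if in_cylb w (constant_seq c) then length l else 0%nat).
  { induction l as [| j l IH]; simpl; [now destruct in_cylb |].
    change (shiftn j (constant_seq c)) with (constant_seq c).
    destruct in_cylb; simpl; now rewrite IH. }
  rewrite Hlen, length_seq; destruct in_cylb.
  - field; apply not_0_INR; lia.
  - simpl; unfold Rdiv; ring.
Qed.

Lemma generic_constant (c : nat) : generic (constant_seq c) (dirac_cyl c).
Proof.
  intros w eps Heps; exists 0%nat; intros n _.
  rewrite emp_cyl_constant; unfold R_dist; rewrite Rminus_diag, Rabs_R0; exact Heps.
Qed.

Lemma closeable_point_constant (K : seqn -> Prop) (c : nat) :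
  K (constant_seq c) -> closeable_point K (constant_seq c).
Proof.
  intros HK eps N Heps HN; exists N, N, (constant_seq c); repeat split; auto.
  - pose proof (pos_INR N); nra.
  - intros j _; rewrite rho_diag; exact Heps.
Qed.

Lemma closeable_two_fixed_points :
  closeable_system 2 two_fixed_points (Per two_fixed_points).
Proof.
  intros m Herg.
  destruct (ergodic_two_fixed_points_dirac m Herg) as [c [Hc Hmc]].
  exists (constant_seq c); split; [| split].
  - now apply two_fixed_points_constant.
  - intros w; rewrite (Hmc w); apply generic_constant.
  - now apply closeable_point_constant, Per_two_fixed_points_constant.
Qed.

Lemma not_linkable_two_fixed_points : ~ linkable (Per two_fixed_points).
Proof.
  intros Hlink.
  destruct (Hlink (constant_seq 0) (constant_seq 1) 1 0)
    as (p1 & p2 & q1 & q2 & z & Hp1 & Hp2 & _ & _ & [Hz _] & _ & _ & _ & _ & Hball1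
        & _ & _ & _ & Hball2);
    [apply Per_two_fixed_points_constant; lia | apply Per_two_fixed_points_constant; lia | lra | lra |].
  specialize (Hball1 0%nat ltac:(lia)); specialize (Hball2 0%nat ltac:(lia)).
  apply rho_lt1_head in Hball1; apply rho_lt1_head in Hball2.
  unfold shiftn, constant_seq in Hball1, Hball2.
  destruct Hz as [Hz | Hz]; rewrite Hz in Hball1, Hball2; lia.
Qed.

Theorem proposition9p2 :
  exists (a : nat) (X : seqn -> Prop),
    shift_space a X /\ closeable_system a X (Per X) /\ ~ linkable (Per X).
Proof.
  exists 2%nat, two_fixed_points.
  split; [exact shift_space_two_fixed_points |].
  split; [exact closeable_two_fixed_points | exact not_linkable_two_fixed_points].
Qed.
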